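(* Consider the Distributed Guided Local Search (DGLS) algorithm described in the context, with any manner, evaporation rate and update scope. Then at the beginning of each round, for every pair of neighboring agents $i,j$, the cost modifier held by agent $i$ for the constraint with $j$ equals the transpose of the one held by agent $j$ for the constraint with $i$, i.e. $M_{ij}=M_{ji}^T$.
   Context: A (binary) Distributed Constraint Optimization Problem (DCOP) consists of agents $1,\dots,n$, each controlling one variable $x_i$ with finite domain $D_i$, and binary constraint functions $f_{ij}:D_i\times D_j\to\mathbb{R}_{\ge0}$ with $f_{ji}=f_{ij}^T$; $\mathcal{N}_i$ is the set of neighbors of $i$. Write $\check f_{ij}=\min f_{ij}$, $\hat f_{ij}=\max f_{ij}$. Tables held by agent $i$ are indexed with $i$'s own value first and the neighbor's value second. DGLS is parameterized by a manner (additive or multiplicative), an evaporation rate $\gamma$, and a scope ($cel$, $tab$, $row$, $col$). Each agent $i$ keeps, for each $j\in\mathcal{N}_i$, a cost modifier $M_{ij}$ (a $|D_i|\times|D_j|$ real matrix), initialized to $0$. The effective cost is $\mathrm{EffCost}(d_i,j,d_j)=f_{ij}(d_i,d_j)+M_{ij}(d_i,d_j)$ (additive) or $f_{ij}(d_i,d_j)\cdot[1+M_{ij}(d_i,d_j)]$ (multiplicative). Initially each agent picks a random value $d_i\in D_i$ and sends it to its neighbors. Rounds are synchronous; in each round agent $i$: (1) sets $\bar P_i=\emptyset$ and receives the neighbors' current values $d_j$; (2) computes $d_i^*\in\arg\min_{d\in D_i}\sum_{j\in\mathcal{N}_i}\mathrm{EffCost}(d,j,d_j)$ and gain $\Delta_i=\sum_{j}[\mathrm{EffCost}(d_i,j,d_j)-\mathrm{EffCost}(d_i^*,j,d_j)]$,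 and exchanges gains with neighbors; (3) if $\Delta_i>0$ and $\Delta_i$ is the best improvement among itself and its neighbors, it sets $d_i\gets d_i^*$; otherwise, if no neighbor can improve (all neighbors' gains are $\le 0$), then for each $j\in\mathcal{N}_i$ it declares $f_{ij}$ violated with probability $\eta=\frac{f_{ij}(d_i,d_j)-\check f_{ij}}{\hat f_{ij}-\check f_{ij}}$, and for each violated one adds $j$ to $\bar P_i$ and sends a SYNC message to $j$; (4) lets $\tilde P_i$ be the set of neighbors from which it received SYNC this round; (5) for each $j\in\mathcal{N}_i$: first evaporates, $M_{ij}\gets\gamma M_{ij}$ entrywise, then updates with current values $d_i,d_j$: scope $cel$: if $j\in\bar P_i\cup\tilde P_i$, $M_{ij}(d_i,d_j)\mathrel{+}=1$; scope $tab$: if $j\in\bar P_i\cup\tilde P_i$, all entries of $M_{ij}$ are increased by 1; scope $row$: if $j\in\bar P_i$, $M_{ij}(d_i,d_j')\mathrel{+}=1$ for all $d_j'$; if $j\in\tilde P_i$, $M_{ij}(d_i',d_j)\mathrel{+}=1$ for all $d_i'$; if $j\in\bar P_i\cap\tilde P_i$, $M_{ij}(d_i,d_j)\mathrel{-}=1$; scope $col$: same as $row$ with the roles exchanged (if $j\in\bar P_i$ increment column $d_j$, if $j\in\tilde P_i$ increment row $d_i$, and subtract 1 at $(d_i,d_j)$ if both); (6) sends its value $d_i$ to its neighbors. *)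

From HB Require Import structures.
From mathcomp Require Import all_boot all_order all_algebra.
Unset Printing Implicit Defensive.
Import Order.TTheory GRing.Theory Num.Theory.
Local Open Scope ring_scope.

Inductive manner := Additive | Multiplicative.
Inductive scope := Cel | Tab | Row | Col.

Section DGLS.
Variables (R : realFieldType) (I : finType) (D : I -> finType).

(* State of the system at the beginning of a round: the current value of
   each agent, and the cost modifiers M i j held by agent i for neighbor j
   (indexed with i's value first). *)
Record state := State {
  value : forall i, D i;
  modif : forall i j, D i -> D j -> R }.

Variables (nbr : rel I) (f : forall i j, D i -> D j -> R)
  (mn : manner) (gamma : R) (sc : scope).

Definition effcost (M : forall i j, D i -> D j -> R) i (x : D i) j (y : D j) : R :=
  match mn with
  | Additive => f i j x y + M i j x y
  | Multiplicative => f i j x y * (1 + M i j x y)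
  end.

Section Round.
Variable s : state.

Definition localcost i (x : D i) : R :=
  \sum_(j | nbr i j) effcost (modif s) i x j (value s j).

Definition is_argmin i (x : D i) : Prop :=
  forall x' : D i, localcost i x <= localcost i x'.

Variable dstar : forall i, D i.   (* chosen d_i^* (an argmin) *)
Variable viol : I -> I -> bool.   (* outcome of the random violation draws *)

Definition gain i : R := localcost i (value s i) - localcost i (dstar i).

Definition moves i : bool :=
  (0 < gain i) &&
  [forall j, nbr i j ==>
     ((gain j < gain i) ||
      ((gain j == gain i) && (nat_of_ord (enum_rank i) < enum_rank j)%N))].

Definition noimp i : bool := [forall j, nbr i j ==> (gain j <= 0)].

Definition fmin i j : R :=
  \big[Num.min/f i j (value s i) (value s j)]_(x : D i)
     \big[Num.min/f i j (value s i) (value s j)]_(y : D j) f i j x y.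
Definition fmax i j : R :=
  \big[Num.max/f i j (value s i) (value s j)]_(x : D i)
     \big[Num.max/f i j (value s i) (value s j)]_(y : D j) f i j x y.

Definition eta i j : R :=
  (f i j (value s i) (value s j) - fmin i j) / (fmax i j - fmin i j).

(* an outcome b of a Bernoulli(eta) draw is possible *)
Definition coin_ok i j (b : bool) : Prop :=
  (b -> 0 < eta i j) /\ (~~ b -> eta i j < 1).

Definition Pbar i j : bool := [&& nbr i j, ~~ moves i, noimp i & viol i j].
(* \tilde P_i : received SYNC from j *)
Definition Ptilde i j : bool := Pbar j i.

Definition newval i : D i := if moves i then dstar i else value s i.

Definition upd i j (x : D i) (y : D j) : R :=
  let m := gamma * modif s i j x y in
  let pb := Pbar i j in let pt := Ptilde i j in
  let a := x == newval i in let b := y == value s j in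
  match sc with
  | Cel => m + ((pb || pt) && (a && b))%:R
  | Tab => m + (pb || pt)%:R
  | Row => m + (pb && a)%:R + (pt && b)%:R - [&& pb, pt, a & b]%:R
  | Col => m + (pb && b)%:R + (pt && a)%:R - [&& pb, pt, a & b]%:R
  end.

Definition step : state := State newval upd.
End Round.

(* st t is the state at the beginning of round t *)
Definition is_run (st : nat -> state) (dstar : nat -> forall i, D i)
    (viol : nat -> I -> I -> bool) : Prop :=
  (forall i j x y, modif (st 0%N) i j x y = 0) /\
  forall t : nat,
    [/\ forall i, is_argmin (st t) i (dstar t i),
        forall i j, nbr i j -> coin_ok (st t) i j (viol t i j)
      & st t.+1 = step (st t) (dstar t) (viol t)].

End DGLS.

From Pilot Require Import Defs.
From HB Require Import structures.
From mathcomp Require Import all_boot all_order all_algebra.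
Import Order.TTheory GRing.Theory Num.Theory.
Local Open Scope ring_scope.

(* The update of M_ij is the evaporated old entry plus an increment that only
   depends on the scope, on the two SYNC flags (j in \bar P_i, j in \tilde P_i)
   and on whether the entry sits in the current row and column.  Exchanging
   i and j swaps the two flags and the row/column tests, and every scope's
   increment is invariant under this double swap.  The row test uses i's new
   value, the column test j's old one; this mismatch is harmless because a
   SYNC between i and j is only sent when neither of them moves, and without
   SYNC the increment vanishes. *)

Section ScopeIncrement.
Variable R : pzRingType.

Definition scope_incr (sc : scope) (pb pt a b : bool) : R :=
  match sc with
  | Cel => ((pb || pt) && (a && b))%:R
  | Tab => (pb || pt)%:R
  | Row => (pb && a)%:R + (pt && b)%:R - [&& pb, pt, a & b]%:R
  | Col => (pb && b)%:R + (pt && a)%:R - [&& pb, pt, a & b]%:R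
  end.

Lemma scope_incrC sc pb pt a b :
  scope_incr sc pb pt a b = scope_incr sc pt pb b a.
Proof.
have swap4 : [&& pt, pb, b & a] = [&& pb, pt, a & b].
  by case: pb pt a b => [] [] [] [].
case: sc => /=.
- by rewrite orbC [b && a]andbC.
- by rewrite orbC.
- by rewrite swap4 [_ + (pb && a)%:R]addrC.
- by rewrite swap4 [_ + (pb && b)%:R]addrC.
Qed.

Lemma scope_incr0 sc a b : scope_incr sc false false a b = 0.
Proof. by case: sc => /=; rewrite ?addr0 ?subr0. Qed.

End ScopeIncrement.

Section OneRound.
Variables (R : realFieldType) (I : finType) (D : I -> finType).
Variables (nbr : rel I) (f : forall i j, D i -> D j -> R).
Variables (mn : manner) (gamma : R) (sc : scope).
Variables (s : state R I D) (ds : forall i, D i) (vl : I -> I -> bool).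

Local Notation value := (value R I D s).
Local Notation modif := (modif R I D s).
Local Notation moves := (moves R I D nbr f mn s ds).
Local Notation newval := (newval R I D nbr f mn s ds).
Local Notation Pbar := (Pbar R I D nbr f mn s ds vl).
Local Notation upd := (upd R I D nbr f mn gamma sc s ds vl).

Lemma Pbar_no_move i j : Pbar i j -> ~~ moves i /\ ~~ moves j.
Proof.
case/and4P => nij nmi /forallP/(_ j) noimp_i _; split => //.
apply: contraL (implyP noimp_i nij) => /andP[gain_gt0 _].
by rewrite -ltNge.
Qed.

Lemma newval_Pbar i j :
  Pbar i j || Pbar j i -> newval i = value i /\ newval j = value j.
Proof.
rewrite /Defs.newval => sync.
have [nmi nmj] : ~~ moves i /\ ~~ moves j.
  by case/orP: sync => /Pbar_no_move [? ?].
by rewrite (negbTE nmi) (negbTE nmj).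
Qed.

Lemma updE i j x y :
  upd i j x y = gamma * modif i j x y +
    scope_incr R sc (Pbar i j) (Pbar j i) (x == newval i) (y == value j).
Proof. by rewrite /Defs.upd /Ptilde; case: sc => /=; rewrite ?addrA. Qed.

Lemma upd_transpose i j x y :
  modif i j x y = modif j i y x -> upd i j x y = upd j i y x.
Proof.
move=> Mij; rewrite !updE Mij scope_incrC; congr (_ + _).
case: (boolP (Pbar i j || Pbar j i)) => [/newval_Pbar[-> ->] // |].
by rewrite negb_or => /andP[/negbTE -> /negbTE ->]; rewrite !scope_incr0.
Qed.

End OneRound.

Theorem lemma1 (R : realFieldType) (I : finType) (D : I -> finType)
  (nbr : rel I) (f : forall i j, D i -> D j -> R)
  (mn : manner) (gamma : R) (sc : scope)
  (st : nat -> @state R I D) (dstar : nat -> forall i, D i)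
  (viol : nat -> I -> I -> bool) :
  (forall i j, nbr i j = nbr j i) ->
  (forall i, ~~ nbr i i) ->
  (forall i j (x : D i) (y : D j), nbr i j -> f j i y x = f i j x y) ->
  (forall i j (x : D i) (y : D j), 0 <= f i j x y) ->
  @is_run R I D nbr f mn gamma sc st dstar viol ->
  forall (t : nat) (i j : I), nbr i j ->
    forall (x : D i) (y : D j), @modif R I D (st t) i j x y = @modif R I D (st t) j i y x.
Proof.
(* The invariant holds edge by edge and for arbitrary costs f. *)
move=> _ _ _ _ [M0 run] t.
elim: t => [|t IH] i j nij x y; first by rewrite !M0.
have [_ _ ->] := run t.
exact/upd_transpose/IH.
Qed.
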